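(* Let $E=[t]_\times R$ where $t\in\mathbb R^3$ and $R\in\mathrm{SO}(3)$ is a rotation about a vector $u$ (i.e. $R$ is given by a unit quaternion $[\sigma\ u^\top]$), and suppose $u^\top t=0$. Let $\tau'=\operatorname{tr}R+1$ and $A=E-E^\top$, with entries $E_{ij}$, $A_{ij}$. Then for every triple $(i,j,k)$ of pairwise distinct indices in $\{1,2,3\}$, $$\big(A_{ki}E_{ii}E_{jk}+A_{ij}E_{kk}E_{ii}-A_{jk}(E_{kk}E_{ik}-E_{ki}E_{jj}+E_{kj}E_{ji}+E_{ij}E_{jk})\big)\tau'+2A_{ij}A_{jk}^2=0,$$ and moreover $$\big(A_{12}A_{23}E_{31}+A_{12}A_{31}E_{32}+A_{12}E_{12}E_{33}+A_{23}A_{31}E_{21}+A_{23}E_{11}E_{23}+A_{31}E_{22}E_{31}\big)\tau'+2A_{12}A_{23}A_{31}=0.$$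
   Context: $[t]_\times$ is the skew-symmetric matrix with $[t]_\times b=t\times b$. A unit quaternion $[\sigma\ u^\top]$ ($\sigma^2+\|u\|^2=1$) determines the rotation $R=2(uu^\top-\sigma[u]_\times)+(\sigma^2-\|u\|^2)I$, whose rotation axis is along $u$ (when $u\neq0$) and $\operatorname{tr}R=4\sigma^2-1$. *)

From HB Require Import structures.
From mathcomp Require Import all_boot all_order all_algebra.
Set Implicit Arguments. Unset Strict Implicit. Unset Printing Implicit Defensive.
Import Order.TTheory GRing.Theory Num.Theory.
Local Open Scope ring_scope.

(* the three indices 1,2,3 of the paper, as 0,1,2 *)
Definition i0 : 'I_3 := @Ordinal 3 0 isT.
Definition i1 : 'I_3 := @Ordinal 3 1 isT.
Definition i2 : 'I_3 := @Ordinal 3 2 isT.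

(* [t]_x : the skew-symmetric matrix with [t]_x b = t x b (indices 0,1,2). *)
Definition crossmx {R : comNzRingType} (t : 'cV[R]_3) : 'M[R]_3 :=
  \matrix_(i < 3, j < 3)
    (if (val i == 0%N) && (val j == 1%N) then - t i2 0
     else if (val i == 0%N) && (val j == 2%N) then t i1 0
     else if (val i == 1%N) && (val j == 0%N) then t i2 0
     else if (val i == 1%N) && (val j == 2%N) then - t i0 0
     else if (val i == 2%N) && (val j == 0%N) then - t i1 0
     else if (val i == 2%N) && (val j == 1%N) then t i0 0
     else 0).

Definition dotv {R : comNzRingType} (a b : 'cV[R]_3) : R := (a^T *m b) 0 0.

(* rotation matrix of the quaternion [sigma u^T]:
   R = 2 (u u^T - sigma [u]_x) + (sigma^2 - |u|^2) I *)
Definition quat_rot {R : comNzRingType} (sigma : R) (u : 'cV[R]_3) : 'M[R]_3 :=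
  2%:R *: (u *m u^T - sigma *: crossmx u) + (sigma ^+ 2 - dotv u u)%:M.

From HB Require Import structures.
From mathcomp Require Import all_boot all_order all_algebra ring.
Set Implicit Arguments.
Unset Strict Implicit.
Unset Printing Implicit Defensive.
Import Order.TTheory GRing.Theory Num.Theory.
Local Open Scope ring_scope.

(* Write K(v) for the skew-symmetric matrix [v]_x.  For a quaternion
   [sigma u^T] with u^T t = 0, the "twisted" translation m := sigma t + u x t
   is again orthogonal to u, and the essential matrix splits as
       E = [t]_x R = sigma K(m) - (u m^T + m u^T),
   a skew-symmetric plus a symmetric matrix (essential_decomposition).  Hence
   A = E - E^T = 2 sigma K(m) (essential_skew), while tr R + 1 = 4 sigma^2 for
   a unit quaternion (quat_rot_trace1).  After these substitutions t has
   disappeared: for any quaternion, the two relations of the theorem evaluated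
   at tau = 4 sigma^2 equal 2 (1 - sigma^2 - |u|^2) times their cubic term in
   A, a polynomial identity in sigma, u, m modulo u^T m = 0 that we check
   entrywise (essential_cyclic_defect, essential_triple_defect).  The theorem
   follows by rewriting E, A and tau' and using that the quaternion is a unit. *)

Section Essential.
Variable R : comNzRingType.

Lemma sum3 (F : 'I_3 -> R) : \sum_k F k = F i0 + F i1 + F i2.
Proof.
rewrite !big_ord_recr big_ord0 /= add0r.
by congr (F _ + F _ + F _); apply/val_inj.
Qed.

Lemma ord3P (i : 'I_3) : [\/ i = i0, i = i1 | i = i2].
Proof.
case: i => [[|[|[|m]]] Hi] //; [apply: Or31|apply: Or32|apply: Or33]; exact: val_inj.
Qed.

Lemma dotvE (a b : 'cV[R]_3) :
  dotv a b = a i0 0 * b i0 0 + a i1 0 * b i1 0 + a i2 0 * b i2 0.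
Proof. by rewrite /dotv mxE sum3 !mxE. Qed.

(* Orthogonality in the form of a monomial rewrite rule, as used by [ring]. *)
Lemma dotv_eq0_rule (a b : 'cV[R]_3) :
  dotv a b = 0 -> a i0 0 * b i0 0 = - (a i1 0 * b i1 0 + a i2 0 * b i2 0).
Proof. by rewrite dotvE => hab; rewrite -[LHS]subr0 -hab; ring. Qed.

Lemma crossmx_tr (a : 'cV[R]_3) : (crossmx a)^T = - crossmx a.
Proof.
apply/matrixP => i j; rewrite !mxE.
by case: (ord3P i) => ->; case: (ord3P j) => -> /=; rewrite ?oppr0 ?opprK.
Qed.

Lemma quat_rotE (sigma : R) (u : 'cV[R]_3) i j :
  quat_rot sigma u i j
    = 2%:R * (u i 0 * u j 0 - sigma * crossmx u i j)
      + (sigma ^+ 2 - dotv u u) * (i == j)%:R.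
Proof. by rewrite !mxE !big_ord1 !mxE mulr_natr. Qed.

(* tr R = 3 sigma^2 - |u|^2, so tr R + 1 = 4 sigma^2 for a unit quaternion. *)
Lemma quat_rot_trace1 (sigma : R) (u : 'cV[R]_3) :
  sigma ^+ 2 + dotv u u = 1 -> mxtrace (quat_rot sigma u) + 1 = 4%:R * sigma ^+ 2.
Proof.
move=> hunit; have hs : sigma ^+ 2 = 1 - dotv u u by rewrite -hunit addrK.
rewrite dotvE in hs.
by rewrite /mxtrace sum3 !quat_rotE dotvE !mxE /=; ring: hs.
Qed.

Definition axis_twist (sigma : R) (u t : 'cV[R]_3) : 'cV[R]_3 :=
  sigma *: t + crossmx u *m t.

(* m stays orthogonal to the rotation axis, since u^T (u x t) = 0. *)
Lemma axis_twist_perp (sigma : R) (u t : 'cV[R]_3) :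
  dotv u t = 0 -> dotv u (axis_twist sigma u t) = 0.
Proof.
move=> /dotv_eq0_rule hp.
by rewrite dotvE /axis_twist !(mxE, sum3) /=; ring: hp.
Qed.

Definition essential_form (sigma : R) (u m : 'cV[R]_3) : 'M[R]_3 :=
  sigma *: crossmx m - (u *m m^T + m *m u^T).

Lemma essential_formE (sigma : R) (u m : 'cV[R]_3) i j :
  essential_form sigma u m i j
    = sigma * crossmx m i j - (u i 0 * m j 0 + m i 0 * u j 0).
Proof. by rewrite !mxE !big_ord1 !mxE. Qed.

(* The key factorisation [t]_x R = sigma [m]_x - (u m^T + m u^T), valid when
   the translation is orthogonal to the axis: t x (u x v) = (t^T v) u then. *)
Lemma essential_decomposition (sigma : R) (u t : 'cV[R]_3) :
  dotv u t = 0 ->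
  crossmx t *m quat_rot sigma u = essential_form sigma u (axis_twist sigma u t).
Proof.
move=> /dotv_eq0_rule hp; apply/matrixP => i j.
rewrite essential_formE mxE sum3 !quat_rotE dotvE /axis_twist.
by case: (ord3P i) => ->; case: (ord3P j) => ->; rewrite !(mxE, sum3) /=; ring: hp.
Qed.

(* The symmetric part cancels in E - E^T. *)
Lemma essential_skew (sigma : R) (u m : 'cV[R]_3) :
  essential_form sigma u m - (essential_form sigma u m)^T
    = (2%:R * sigma) *: crossmx m.
Proof.
have sym : (u *m m^T + m *m u^T)^T = u *m m^T + m *m u^T.
  by rewrite linearD /= !trmx_mul !trmxK addrC.
rewrite /essential_form linearB /= sym linearZ /= crossmx_tr scalerN.
by rewrite opprB opprK addrA subrK -scalerDl mulr_natl mulr2n.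
Qed.

Definition cyclic_relation (E A : 'M[R]_3) (tau : R) (i j k : 'I_3) : R :=
  (A k i * E i i * E j k + A i j * E k k * E i i
   - A j k * (E k k * E i k - E k i * E j j + E k j * E j i + E i j * E j k))
    * tau + 2%:R * A i j * A j k ^+ 2.

Definition triple_relation (E A : 'M[R]_3) (tau : R) : R :=
  (A i0 i1 * A i1 i2 * E i2 i0 + A i0 i1 * A i2 i0 * E i2 i1
   + A i0 i1 * E i0 i1 * E i2 i2 + A i1 i2 * A i2 i0 * E i1 i0
   + A i1 i2 * E i0 i0 * E i1 i2 + A i2 i0 * E i1 i1 * E i2 i0)
    * tau + 2%:R * A i0 i1 * A i1 i2 * A i2 i0.

Section Relations.
Variables (sigma : R) (u m : 'cV[R]_3).
Hypothesis hperp : dotv u m = 0.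

Let E := essential_form sigma u m.
Let A := (2%:R * sigma) *: crossmx m.

Lemma essential_cyclic_defect (i j k : 'I_3) :
  i != j -> j != k -> i != k ->
  cyclic_relation E A (4%:R * sigma ^+ 2) i j k
    = 2%:R * (1 - (sigma ^+ 2 + dotv u u)) * (A i j * A j k ^+ 2).
Proof.
have hp := dotv_eq0_rule hperp; rewrite dotvE /cyclic_relation /A /E.
by case: (ord3P i) => ->; case: (ord3P j) => ->; case: (ord3P k) => -> // _ _ _;
  rewrite !essential_formE !mxE /=; ring: hp.
Qed.

Lemma essential_triple_defect :
  triple_relation E A (4%:R * sigma ^+ 2)
    = 2%:R * (1 - (sigma ^+ 2 + dotv u u)) * (A i0 i1 * A i1 i2 * A i2 i0).
Proof.
have hp := dotv_eq0_rule hperp; rewrite dotvE /triple_relation /A /E.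
by rewrite !essential_formE !mxE /=; ring: hp.
Qed.

End Relations.
End Essential.

Theorem mainTheorem5 (R : realFieldType) (sigma : R) (u t : 'cV[R]_3)
  (hunit : sigma ^+ 2 + dotv u u = 1)
  (hperp : dotv u t = 0) :
  let Rot := quat_rot sigma u in
  let E := crossmx t *m Rot in
  let A := E - E^T in
  let tau' := mxtrace Rot + 1 in
  (forall i j k : 'I_3, i != j -> j != k -> i != k ->
     (A k i * E i i * E j k + A i j * E k k * E i i
      - A j k * (E k k * E i k - E k i * E j j + E k j * E j i + E i j * E j k))
       * tau' + 2%:R * A i j * A j k ^+ 2 = 0)
  /\
  (A i0 i1 * A i1 i2 * E i2 i0 + A i0 i1 * A i2 i0 * E i2 i1
   + A i0 i1 * E i0 i1 * E i2 i2 + A i1 i2 * A i2 i0 * E i1 i0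
   + A i1 i2 * E i0 i0 * E i1 i2 + A i2 i0 * E i1 i1 * E i2 i0)
    * tau' + 2%:R * A i0 i1 * A i1 i2 * A i2 i0 = 0.
Proof.
move=> Rot E A tau'.
pose m := axis_twist sigma u t.
have hm : dotv u m = 0 := axis_twist_perp sigma hperp.
have hE : E = essential_form sigma u m := essential_decomposition sigma hperp.
have hA : A = (2%:R * sigma) *: crossmx m by rewrite /A hE essential_skew.
have htau : tau' = 4%:R * sigma ^+ 2 := quat_rot_trace1 hunit.
rewrite htau hA hE; split=> [i j k hij hjk hik|].
  have := essential_cyclic_defect sigma hm hij hjk hik.
  by rewrite hunit subrr mulr0 mul0r => relation0; exact: relation0.
have := essential_triple_defect sigma hm.
by rewrite hunit subrr mulr0 mul0r => relation0; exact: relation0.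
Qed.
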